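(* Let $q>1$, $\delta:=[2(q+1)]^{1/(q-1)}$, and let $W$ be a (small) neighborhood of $0$ in $\mathbb{R}$. There are constants $C_6,C_7>0$ such that for all $a\in[1/2,1]$, all $0<\xi\leq C_6$, all $0<\eta\leq C_6$, and every $C^1$ function $r:[0,\delta]\to\mathbb{R}$ with $\sup_{t\in[0,\delta]}\big(|r(t)|+|r'(t)|\big)\leq\xi$, the map $f_{a,r}:[0,\delta]\to\mathbb{R}$, $f_{a,r}(t):=\frac{t^2}{2}-a\frac{t^{q+1}}{q+1}+r(t)$, satisfies $$t\in[0,\delta]\setminus W,\ |f'_{a,r}(t)|\leq\eta\ \Longrightarrow\ |t-a^{-1/(q-1)}|\leq C_7(\xi+\eta),$$ and $$\inf_{t\in[0,\delta]\setminus W,\ |f'_{a,r}(t)|\leq\eta}f_{a,r}(t)\geq\Big(\frac12-\frac{1}{q+1}\Big)\Big(\frac1a\Big)^{2/(q-1)}-C_7(\xi+\eta).$$ *)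

From Stdlib Require Import Reals Lra.
Open Scope R_scope.

(* Real power t^p for t >= 0 with the convention 0^p = 0 (p > 0 in use). *)
Definition rpow (t p : R) : R := if Rlt_dec 0 t then Rpower t p else 0.

Definition delta (q : R) : R := Rpower (2 * (q + 1)) (1 / (q - 1)).

Definition Icc0 (d : R) (t : R) : Prop := 0 <= t <= d.

Definition has_deriv_on (d : R) (r r' : R -> R) : Prop :=
  forall t, Icc0 d t ->
    limit1_in (fun s => (r s - r t) / (s - t))
              (fun s => Icc0 d s /\ s <> t) (r' t) t.

Definition C1_on (d : R) (r r' : R -> R) : Prop :=
  has_deriv_on d r r' /\
  (forall t, Icc0 d t -> limit1_in r' (Icc0 d) (r' t) t).

Definition f_ar (q a : R) (r : R -> R) (t : R) : R :=
  t ^ 2 / 2 - a * rpow t (q + 1) / (q + 1) + r t.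

Definition df_ar (q a : R) (r' : R -> R) (t : R) : R :=
  t - a * rpow t q + r' t.

Definition nbhd0 (W : R -> Prop) : Prop :=
  exists eps, 0 < eps /\ forall t, Rabs t < eps -> W t.

(* With p := q - 1 and t0 := a^(-1/p), the derivative factors as
   f'_{a,r}(t) = t a (t0^p - t^p) + r'(t).  Outside W the point t is bounded
   below by some m > 0, and there the mean value theorem bounds |t^p - t0^p|
   below by a multiple of |t - t0|, so a small derivative forces t close to
   t0.  The value estimate then follows from the Lipschitz bound of
   f_a := f_{a,0} on [m, delta] and f_a(t0) = (1/2 - 1/(q+1)) t0^2. *)
From Stdlib Require Import Reals Lra.
Open Scope R_scope.

Lemma MVT_abs_in (f f' : R -> R) lo hi x y :
  (forall c, lo <= c <= hi -> derivable_pt_lim f c (f' c)) ->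
  lo <= x <= hi -> lo <= y <= hi ->
  exists c, lo <= c <= hi /\ Rabs (f x - f y) = Rabs (f' c) * Rabs (x - y).
Proof.
  intros Hd Hx Hy.
  assert (Hbetween : forall c, Rmin y x <= c <= Rmax y x -> lo <= c <= hi)
    by (intros c; unfold Rmin, Rmax; destruct Rle_dec; lra).
  destruct (MVT_abs f f' y x) as [c [Hfc Hc]].
  { intros c Hc; apply Hd, Hbetween, Hc. }
  exists c; split; [apply Hbetween, Hc | exact Hfc].
Qed.

Lemma MVT_abs_le (f f' : R -> R) lo hi K x y :
  (forall c, lo <= c <= hi -> derivable_pt_lim f c (f' c)) ->
  (forall c, lo <= c <= hi -> Rabs (f' c) <= K) ->
  lo <= x <= hi -> lo <= y <= hi -> Rabs (f x - f y) <= K * Rabs (x - y).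
Proof.
  intros Hd HK Hx Hy.
  destruct (MVT_abs_in f f' lo hi x y Hd Hx Hy) as [c [Hc ->]].
  apply Rmult_le_compat_r; [apply Rabs_pos | apply HK, Hc].
Qed.

Lemma MVT_abs_ge (f f' : R -> R) lo hi k x y :
  (forall c, lo <= c <= hi -> derivable_pt_lim f c (f' c)) ->
  (forall c, lo <= c <= hi -> k <= Rabs (f' c)) ->
  lo <= x <= hi -> lo <= y <= hi -> k * Rabs (x - y) <= Rabs (f x - f y).
Proof.
  intros Hd Hk Hx Hy.
  destruct (MVT_abs_in f f' lo hi x y Hd Hx Hy) as [c [Hc ->]].
  apply Rmult_le_compat_r; [apply Rabs_pos | apply Hk, Hc].
Qed.

Lemma Rpower_pos x y : 0 < Rpower x y.
Proof. apply exp_pos. Qed.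

Lemma Rpower_Ropp_Rinv x y : 0 < x -> Rpower x (- y) = Rpower (/ x) y.
Proof. intros Hx; unfold Rpower; rewrite ln_Rinv by exact Hx; f_equal; ring. Qed.

Lemma Rpower_minus_1 x y : 0 < x -> Rpower x (y - 1) = Rpower x y / x.
Proof.
  intros Hx; unfold Rminus.
  rewrite Rpower_plus, Rpower_Ropp, Rpower_1 by exact Hx; reflexivity.
Qed.

Lemma Rpower_plus_1 x y : 0 < x -> Rpower x (y + 1) = x * Rpower x y.
Proof. intros Hx; rewrite Rpower_plus, Rpower_1 by exact Hx; ring. Qed.

Lemma rpow_Rpower t x : 0 < t -> rpow t x = Rpower t x.
Proof. intros Ht; unfold rpow; destruct Rlt_dec; [reflexivity | lra]. Qed.

Lemma Rpower_sub_abs_ge p m d x y :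
  0 < p -> 0 < m -> m <= x <= d -> m <= y <= d ->
  p * Rpower m p / d * Rabs (x - y) <= Rabs (Rpower x p - Rpower y p).
Proof.
  intros Hp Hm Hx Hy.
  apply (MVT_abs_ge (fun s => Rpower s p) (fun s => p * Rpower s (p - 1)) m d);
    [| | exact Hx | exact Hy].
  - intros c Hc; apply derivable_pt_lim_power; lra.
  - intros c Hc.
    pose proof (Rpower_pos c p).
    rewrite Rpower_minus_1, Rabs_pos_eq by
      (try (apply Rmult_le_pos, Rlt_le, Rdiv_lt_0_compat); lra).
    unfold Rdiv; rewrite !Rmult_assoc; apply Rmult_le_compat_l; [lra |].
    apply Rmult_le_compat; [apply Rlt_le, Rpower_pos | apply Rlt_le, Rinv_0_lt_compat; lra | |].
    + apply Rle_Rpower_l; lra.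
    + apply Rinv_le_contravar; lra.
Qed.

Definition crit (q a : R) : R := Rpower a (- (1 / (q - 1))).

Definition f_a (q a t : R) : R := t ^ 2 / 2 - a * Rpower t (q + 1) / (q + 1).

Lemma crit_Rpower q a : 0 < a -> q <> 1 -> a * Rpower (crit q a) (q - 1) = 1.
Proof.
  intros Ha Hq; unfold crit.
  rewrite Rpower_mult.
  replace (- (1 / (q - 1)) * (q - 1)) with (Ropp 1) by (field; lra).
  rewrite Rpower_Ropp, Rpower_1 by exact Ha.
  field; lra.
Qed.

Lemma crit_sqr q a : 0 < a -> crit q a ^ 2 = Rpower (/ a) (2 / (q - 1)).
Proof.
  intros Ha; unfold crit; rewrite Rpower_Ropp_Rinv by exact Ha.
  rewrite <- Rpower_pow, Rpower_mult by apply Rpower_pos.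
  f_equal; simpl; unfold Rdiv; ring.
Qed.

Lemma crit_ge_1 q a : 1 < q -> 0 < a <= 1 -> 1 <= crit q a.
Proof.
  intros Hq Ha; unfold crit; rewrite Rpower_Ropp_Rinv by lra.
  rewrite <- (Rpower_O (/ a)) at 1 by (apply Rinv_0_lt_compat; lra).
  apply Rle_Rpower; [rewrite <- Rinv_1; apply Rinv_le_contravar; lra |].
  apply Rlt_le, Rdiv_lt_0_compat; lra.
Qed.

Lemma crit_le_delta q a : 1 < q -> 1 / 2 <= a -> crit q a <= delta q.
Proof.
  intros Hq Ha; unfold crit, delta; rewrite Rpower_Ropp_Rinv by lra.
  apply Rle_Rpower_l; [apply Rlt_le, Rdiv_lt_0_compat; lra |].
  split; [apply Rinv_0_lt_compat; lra |].
  apply Rle_trans with 2; [| lra].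
  rewrite <- (Rinv_inv 2); apply Rinv_le_contravar; lra.
Qed.

Lemma f_a_crit q a :
  0 < a -> 1 < q -> f_a q a (crit q a) = (1 / 2 - 1 / (q + 1)) * Rpower (/ a) (2 / (q - 1)).
Proof.
  intros Ha Hq; unfold f_a.
  replace (q + 1) with ((q - 1) + INR 2) at 1 by (simpl; ring).
  rewrite Rpower_plus, Rpower_pow by apply Rpower_pos.
  rewrite <- Rmult_assoc, crit_Rpower, crit_sqr by lra.
  field; lra.
Qed.

Lemma f_a_derivative q a s :
  q + 1 <> 0 -> 0 < s -> derivable_pt_lim (f_a q a) s (s - a * Rpower s q).
Proof.
  intros Hq Hs.
  pose proof (derivable_pt_lim_minus _ _ s _ _
    (derivable_pt_lim_scal _ (/ 2) s _ (derivable_pt_lim_pow s 2))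
    (derivable_pt_lim_scal _ (a / (q + 1)) s _ (derivable_pt_lim_power s (q + 1) Hs)))
    as Hd.
  replace (s - a * Rpower s q) with
    (/ 2 * (INR 2 * s ^ Init.Nat.pred 2) - a / (q + 1) * ((q + 1) * Rpower s (q + 1 - 1)))
    by (replace (q + 1 - 1) with q by ring; simpl; field; exact Hq).
  refine (derivable_pt_lim_ext _ (f_a q a) _ _ _ Hd).
  intros y; unfold minus_fct, mult_real_fct, f_a; field; exact Hq.
Qed.

Lemma f_a_Lipschitz q a m d x y :
  0 <= q -> 0 <= a <= 1 -> 0 < m -> m <= x <= d -> m <= y <= d ->
  Rabs (f_a q a x - f_a q a y) <= (d + Rpower d q) * Rabs (x - y).
Proof.
  intros Hq Ha Hm Hx Hy.
  apply (MVT_abs_le _ (fun s => s - a * Rpower s q) m d); [| | exact Hx | exact Hy].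
  - intros c Hc; apply f_a_derivative; lra.
  - intros c Hc.
    assert (Hpow : Rpower c q <= Rpower d q) by (apply Rle_Rpower_l; lra).
    pose proof (Rpower_pos c q).
    unfold Rminus; eapply Rle_trans; [apply Rabs_triang |].
    rewrite Rabs_Ropp, Rabs_pos_eq, Rabs_pos_eq by (try apply Rmult_le_pos; lra).
    nra.
Qed.

Lemma df_ar_crit q a r' t :
  0 < t -> 0 < a -> q <> 1 ->
  df_ar q a r' t = t * a * (Rpower (crit q a) (q - 1) - Rpower t (q - 1)) + r' t.
Proof.
  intros Ht Ha Hq; unfold df_ar.
  rewrite rpow_Rpower by exact Ht.
  replace q with ((q - 1) + 1) at 1 by ring.
  rewrite Rpower_plus_1 by exact Ht.
  replace (t * a * (Rpower (crit q a) (q - 1) - Rpower t (q - 1)))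
    with (t * (a * Rpower (crit q a) (q - 1)) - a * (t * Rpower t (q - 1))) by ring.
  rewrite crit_Rpower by assumption; ring.
Qed.

Lemma f_ar_f_a q a r t : 0 < t -> f_ar q a r t = f_a q a t + r t.
Proof. intros Ht; unfold f_ar, f_a; rewrite rpow_Rpower by exact Ht; reflexivity. Qed.

Lemma dist_crit_le q a m d r' t xi eta :
  1 < q -> 1 / 2 <= a -> 0 < m -> m <= t <= d -> m <= crit q a <= d ->
  Rabs (r' t) <= xi -> Rabs (df_ar q a r' t) <= eta ->
  Rabs (t - crit q a) <= 2 * d / (m * (q - 1) * Rpower m (q - 1)) * (xi + eta).
Proof.
  intros Hq Ha Hm Ht Hc Hr' Hdf.
  set (t0 := crit q a) in *; set (p := q - 1) in *.
  assert (Hp : 0 < p) by (unfold p; lra).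
  pose proof (Rpower_pos m p) as Hmp.
  assert (Hsep : p * Rpower m p / d * Rabs (t - t0) <= Rabs (Rpower t0 p - Rpower t p)).
  { rewrite (Rabs_minus_sym (Rpower t0 p)); apply Rpower_sub_abs_ge; assumption. }
  assert (Hgap : t * a * Rabs (Rpower t0 p - Rpower t p) <= xi + eta).
  { rewrite <- (Rabs_pos_eq (t * a)), <- Rabs_mult by nra.
    replace (t * a * (Rpower t0 p - Rpower t p)) with (df_ar q a r' t - r' t)
      by (unfold t0, p; rewrite df_ar_crit by lra; ring).
    unfold Rminus; eapply Rle_trans; [apply Rabs_triang |].
    rewrite Rabs_Ropp; lra. }
  assert (Hscaled : m / 2 * (p * Rpower m p / d * Rabs (t - t0)) <= xi + eta).
  { eapply Rle_trans; [| exact Hgap].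
    apply Rmult_le_compat; [lra | | nra | exact Hsep].
    apply Rmult_le_pos; [apply Rlt_le, Rdiv_lt_0_compat; nra | apply Rabs_pos]. }
  replace (Rabs (t - t0))
    with (2 * d / (m * p * Rpower m p) * (m / 2 * (p * Rpower m p / d * Rabs (t - t0))))
    by (field; repeat split; lra).
  apply Rmult_le_compat_l; [| exact Hscaled].
  apply Rlt_le, Rdiv_lt_0_compat; [lra |]; apply Rmult_lt_0_compat; nra.
Qed.

Lemma f_ar_ge_crit q a m d r t xi dist :
  0 <= q -> 0 < a <= 1 -> 0 < m -> m <= t <= d -> m <= crit q a <= d ->
  Rabs (r t) <= xi -> Rabs (t - crit q a) <= dist ->
  f_a q a (crit q a) - (d + Rpower d q) * dist - xi <= f_ar q a r t.
Proof.
  intros Hq Ha Hm Ht Hc Hr Hdist.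
  rewrite f_ar_f_a by lra.
  assert (Hlip : Rabs (f_a q a t - f_a q a (crit q a)) <= (d + Rpower d q) * dist).
  { eapply Rle_trans; [apply (f_a_Lipschitz q a m d); lra |].
    apply Rmult_le_compat_l; [pose proof (Rpower_pos d q); lra | exact Hdist]. }
  pose proof (Rle_abs (- r t)); pose proof (Rle_abs (- (f_a q a t - f_a q a (crit q a)))).
  rewrite !Rabs_Ropp in *; lra.
Qed.

Lemma ge_of_not_nbhd (W : R -> Prop) eps t :
  (forall s, Rabs s < eps -> W s) -> 0 <= t -> ~ W t -> eps <= t.
Proof.
  intros HW Ht HnW; destruct (Rle_or_lt eps t) as [H | H]; [exact H |].
  exfalso; apply HnW, HW; rewrite Rabs_pos_eq; lra.
Qed.

Theorem lemma3p4 (q : R) (W : R -> Prop) :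
  1 < q -> nbhd0 W ->
  exists C6 C7 : R, 0 < C6 /\ 0 < C7 /\
    forall (a xi eta : R) (r r' : R -> R),
      1 / 2 <= a <= 1 ->
      0 < xi <= C6 ->
      0 < eta <= C6 ->
      C1_on (delta q) r r' ->
      (forall t, Icc0 (delta q) t -> Rabs (r t) + Rabs (r' t) <= xi) ->
      (forall t, Icc0 (delta q) t -> ~ W t ->
         Rabs (df_ar q a r' t) <= eta ->
         Rabs (t - Rpower a (- (1 / (q - 1)))) <= C7 * (xi + eta)) /\
      (forall t, Icc0 (delta q) t -> ~ W t ->
         Rabs (df_ar q a r' t) <= eta ->
         (1 / 2 - 1 / (q + 1)) * Rpower (/ a) (2 / (q - 1)) - C7 * (xi + eta)
           <= f_ar q a r t).
Proof.
  intros Hq [eps [Heps HW]].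
  set (m := Rmin eps 1); set (d := delta q).
  assert (Hm : 0 < m) by (apply Rmin_pos; lra).
  pose proof (Rmin_l eps 1) as Hme; pose proof (Rmin_r eps 1) as Hm1; fold m in Hme, Hm1.
  assert (Hd : 0 < d) by apply Rpower_pos.
  set (K := 2 * d / (m * (q - 1) * Rpower m (q - 1))); set (M := d + Rpower d q).
  assert (HK : 0 < K).
  { apply Rdiv_lt_0_compat; [lra |]; apply Rmult_lt_0_compat; [nra | apply Rpower_pos]. }
  assert (HM : 0 < M) by (pose proof (Rpower_pos d q); unfold M; lra).
  (* The estimates hold for all xi, eta > 0. *)
  exists 1, ((1 + M) * K + 1); split; [lra | split; [nra |]].
  intros a xi eta r r' Ha Hxi Heta _ Hr.
  assert (Hc : m <= crit q a <= d)
    by (split; [pose proof (crit_ge_1 q a Hq ltac:(lra)); lra | apply crit_le_delta; lra]).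
  assert (HKM : 0 <= K * (xi + eta) /\ 0 <= M * (K * (xi + eta)))
    by (split; [| apply Rmult_le_pos; [lra |]]; apply Rmult_le_pos; lra).
  assert (Hnear : forall t, Icc0 d t -> ~ W t -> Rabs (df_ar q a r' t) <= eta ->
                    m <= t <= d /\ Rabs (t - crit q a) <= K * (xi + eta)).
  { intros t Ht HnW Hdf.
    pose proof (ge_of_not_nbhd W eps t HW (proj1 Ht) HnW); unfold Icc0 in Ht.
    pose proof (Hr t Ht); pose proof (Rabs_pos (r t)).
    split; [lra | apply (dist_crit_le q a m d r'); lra]. }
  split; intros t Ht HnW Hdf; destruct (Hnear t Ht HnW Hdf) as [Htm Hdist].
  - unfold crit in Hdist; lra.
  - pose proof (Hr t Ht); pose proof (Rabs_pos (r' t)).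
    rewrite <- f_a_crit by lra.
    enough (f_a q a (crit q a) - M * (K * (xi + eta)) - xi <= f_ar q a r t) by lra.
    apply (f_ar_ge_crit q a m d); lra.
Qed.
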